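(* Let $(\varepsilon_t)_{t\in\mathbb{Z}}$ be i.i.d. copies of a random variable $\varepsilon$, let $Y$ be a measurable function and $X_t=Y(\varepsilon_t,\varepsilon_{t-1},\varepsilon_{t-2},\dots)$. Let $(\varepsilon_t^* )_{t\in\mathbb{Z}}$ be an i.i.d. copy of $(\varepsilon_t)_{t\in\mathbb{Z}}$, independent of it, and $X_t'=Y(\varepsilon_t,\dots,\varepsilon_1,\varepsilon_0^*,\varepsilon_{-1}^*,\dots)$. Let $F_X(x)=\mathbb{P}(X_0\le x)$, fix $\tau\in(0,1)$ and let $\xi_0(\tau)=\inf\{x:F_X(x)\ge\tau\}$. Suppose $F_X$ is Lipschitz continuous in a neighborhood of $\xi_0(\tau)$ and that $(\mathbb{E}|X_n-X_n'|^\alpha)^{1/\alpha}=O(\varrho^n)$ as $n\to\infty$ for some $\alpha>0$ and $\varrho\in(0,1)$. Then there exist $\delta>0$ and $\sigma\in(0,1)$ such that $$\sup_{\xi\in\mathbb{R}:\,|\xi-\xi_0(\tau)|\le\delta}\big(\mathbb{E}|1\{X_n<\xi\}-1\{X_n'<\xi\}|^2\big)^{1/2}=O(\sigma^n).$$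
   Context: $1\{\cdot\}$ denotes the indicator function. *)

From HB Require Import structures.
From mathcomp Require Import all_boot all_order all_algebra.
From mathcomp Require Import all_classical all_reals all_analysis.
Set Implicit Arguments. Unset Strict Implicit. Unset Printing Implicit Defensive.
Import Order.TTheory GRing.Theory Num.Theory.
Local Open Scope classical_set_scope.
Local Open Scope ring_scope.

Definition mutually_independent (d : measure_display) (Omega : measurableType d)
  (R : realType) (P : probability Omega R) (dE : measure_display)
  (E : measurableType dE) (I : eqType) (f : I -> Omega -> E) : Prop :=
  forall (s : seq I) (B : I -> set E), uniq s ->
    (forall i, i \in s -> measurable (B i)) ->
    P (\big[setI/setT]_(i <- s) (f i @^-1` B i)) =
    (\prod_(i <- s) P (f i @^-1` B i))%E.

Definition identically_distributed (d : measure_display) (Omega : measurableType d)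
  (R : realType) (P : probability Omega R) (dE : measure_display)
  (E : measurableType dE) (I : Type) (f : I -> Omega -> E) : Prop :=
  forall i j (B : set E), measurable B -> P (f i @^-1` B) = P (f j @^-1` B).

Definition coord_sets (dE : measure_display) (E : measurableType dE)
  : set (set (nat -> E)) :=
  [set A | exists (k : nat) (B : set E), measurable B /\ A = (fun s => s k) @^-1` B].

(* Measurability of Y : E^nat -> R w.r.t. the product sigma-algebra
   (generated by the coordinate projections) and the Borel sets of R. *)
Definition prod_measurable_fun (dE : measure_display) (E : measurableType dE)
  (R : realType) (Y : (nat -> E) -> R) : Prop :=
  forall B : set R, measurable B -> <<s @coord_sets dE E >> (Y @^-1` B).

From HB Require Import structures.
From mathcomp Require Import all_boot all_order all_algebra.
From mathcomp Require Import all_classical all_reals all_analysis.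
From mathcomp Require Import measurable_realfun ring lra.
Import Order.TTheory GRing.Theory Num.Theory.
Set Implicit Arguments.
Unset Strict Implicit.
Unset Printing Implicit Defensive.
Local Open Scope classical_set_scope.
Local Open Scope ring_scope.

(* The indicators 1{X_n < xi} and 1{X'_n < xi} can only differ if X_n is within h of xi or
   if |X_n - X'_n| >= h.  By stationarity X_n has the distribution function F_X, so the first
   event has probability at most 2 L h by the Lipschitz condition; by Markov's inequality the
   second has probability at most E|X_n - X'_n|^alpha / h^alpha = O((rho^n / h)^alpha).
   Choosing h = u^n with rho < u < 1 makes both terms geometrically small, uniformly in xi. *)

Lemma g_sigma_preimage_measurable d (Omega : measurableType d) (T : Type)
    (G : set (set T)) (g : Omega -> T) :
  (forall A, G A -> measurable (g @^-1` A)) ->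
  forall A, <<s G >> A -> measurable (g @^-1` A).
Proof.
move=> mG A; apply: (@smallest_sub _ _ _ [set A | measurable (g @^-1` A)]) => //.
split => /=; first by rewrite preimage_set0.
- by move=> B mB; rewrite setTD preimage_setC; exact: measurableC.
- by move=> F mF; rewrite preimage_bigcup; exact: bigcupT_measurable.
Qed.

Lemma coord_preimage_measurable d (Omega : measurableType d)
    (dE : measure_display) (E : measurableType dE) (f : nat -> Omega -> E) :
  (forall k, measurable_fun setT (f k)) ->
  forall A, <<s @coord_sets dE E >> A -> measurable ((fun w k => f k w) @^-1` A).
Proof.
move=> mf; apply: g_sigma_preimage_measurable => _ [k [B [mB ->]]].
by have := mf k measurableT B mB; rewrite setTI.
Qed.

Lemma prod_measurable_fun_comp (R : realType) d (Omega : measurableType d)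
    (dE : measure_display) (E : measurableType dE) (Y : (nat -> E) -> R)
    (f : nat -> Omega -> E) :
  prod_measurable_fun Y -> (forall k, measurable_fun setT (f k)) ->
  measurable_fun setT (fun w => Y (fun k => f k w)).
Proof.
by move=> mY mf _ B mB; rewrite setTI; exact: coord_preimage_measurable (mY B mB).
Qed.

Lemma probability_preimage_eq_g_sigma d (Omega : measurableType d) (R : realType)
    (P : probability Omega R) (T : Type) (G : set (set T)) (g1 g2 : Omega -> T) :
  setI_closed G ->
  (forall A, G A -> measurable (g1 @^-1` A) /\ measurable (g2 @^-1` A)) ->
  (forall A, G A -> P (g1 @^-1` A) = P (g2 @^-1` A)) ->
  forall A, <<s G >> A -> P (g1 @^-1` A) = P (g2 @^-1` A).
Proof.
move=> GI mG PG.
have mg A : <<s G >> A -> measurable (g1 @^-1` A) /\ measurable (g2 @^-1` A).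
  by move=> sGA; split; apply: g_sigma_preimage_measurable sGA => B /mG[].
pose D := [set A | <<s G >> A /\ P (g1 @^-1` A) = P (g2 @^-1` A)].
suff : <<s G >> `<=` D by move=> sGD A /sGD[].
apply: lambda_system_subset => //; last first.
  by move=> A GA; split; [exact: sub_sigma_algebra | exact: PG].
apply/dynkin_lambda_system; split.
- split; last by rewrite !preimage_setT.
  by have := sigma_algebraCD (@sigma_algebra0 _ setT G); rewrite setD0.
- move=> A [sGA PA]; split; first by have := sigma_algebraCD sGA; rewrite setTD.
  have [m1 m2] := mg A sGA.
  by rewrite 2!preimage_setC (probability_setC _ m1) (probability_setC _ m2) PA.
- move=> F tF DF; split; first by apply: sigma_algebra_bigcup => n; case: (DF n).
  have tFg (g : Omega -> T) : trivIset setT (fun n => g @^-1` F n).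
    by move=> i j _ _ [w [Fi Fj]]; apply: tF => //; exists (g w).
  rewrite !preimage_bigcup !measure_bigcup //; try by move=> n _; case: (mg _ (DF n).1).
  by apply: eq_eseriesr => n _; case: (DF n).
Qed.

Definition cylinder {E : Type} (m : nat) (B : nat -> set E) : set (nat -> E) :=
  [set s | forall k, (k < m)%N -> B k (s k)].

Definition cylinders (dE : measure_display) (E : measurableType dE)
  : set (set (nat -> E)) :=
  [set A | exists (m : nat) (B : nat -> set E),
    (forall k, measurable (B k)) /\ A = cylinder m B].

Lemma cylinders_setI_closed dE (E : measurableType dE) : setI_closed (@cylinders dE E).
Proof.
move=> _ _ [m1 [B1 [mB1 ->]]] [m2 [B2 [mB2 ->]]].
exists (maxn m1 m2), (fun k => (if (k < m1)%N then B1 k else setT) `&`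
                               (if (k < m2)%N then B2 k else setT)); split.
  by move=> k; apply: measurableI; case: ifP.
apply/seteqP; split => [s [s1 s2] k _|s s12].
  by split; case: ifP => // km; [exact: s1 | exact: s2].
by split=> k km; have := s12 k; rewrite leq_max km ?orbT => /(_ isT) [].
Qed.

Lemma coord_sets_sub_cylinders dE (E : measurableType dE) :
  @coord_sets dE E `<=` @cylinders dE E.
Proof.
move=> _ [k [B [mB ->]]]; exists k.+1, (fun j => if j == k then B else setT).
split=> [j|]; first by case: ifP.
apply/seteqP; split => [s Bs j _|s /(_ k (ltnSn k))]; last by rewrite eqxx.
by case: ifP => // /eqP ->.
Qed.

Lemma preimage_cylinder (Omega E : Type) (f : nat -> Omega -> E) m B :
  (fun w k => f k w) @^-1` cylinder m B =
  \big[setI/setT]_(k <- iota 0 m) (f k @^-1` B k).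
Proof.
rewrite -bigcap_seq; apply/seteqP; split => w /= fw k.
- by rewrite /= mem_iota add0n => /andP[_ /fw].
- by move=> km; apply: fw; rewrite /= mem_iota add0n km.
Qed.

Section independent_family.
Context d (Omega : measurableType d) (R : realType) (P : probability Omega R).
Context dE (E : measurableType dE).

Lemma mutually_independent_comp (I J : eqType) (f : I -> Omega -> E) (phi : J -> I) :
  injective phi -> mutually_independent P f -> mutually_independent P (f \o phi).
Proof.
move=> phi_inj ind s B us mB.
pose B' i := [set e | forall j, phi j = i -> B j e].
have B'phi j : B' (phi j) = B j.
  by apply/seteqP; split => [e|e Be j' /phi_inj ->//]; apply.
have := ind (map phi s) B'; rewrite map_inj_uniq // !big_map.
under eq_bigr do rewrite B'phi; under [in RHS]eq_bigr do rewrite B'phi.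
apply=> // _ /mapP[j js ->]; rewrite B'phi; exact: mB.
Qed.

Lemma independent_cylinder_prob (f : nat -> Omega -> E) m B :
  mutually_independent P f -> (forall k, measurable (B k)) ->
  P ((fun w k => f k w) @^-1` cylinder m B) = (\prod_(k <- iota 0 m) P (f k @^-1` B k))%E.
Proof.
by move=> ind mB; rewrite preimage_cylinder ind ?iota_uniq.
Qed.

Lemma independent_seq_law_eq (f g : nat -> Omega -> E) :
  (forall k, measurable_fun setT (f k)) -> (forall k, measurable_fun setT (g k)) ->
  mutually_independent P f -> mutually_independent P g ->
  (forall k B, measurable B -> P (f k @^-1` B) = P (g k @^-1` B)) ->
  forall A, <<s @coord_sets dE E >> A ->
  P ((fun w k => f k w) @^-1` A) = P ((fun w k => g k w) @^-1` A).
Proof.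
move=> mf mg indf indg fg A cA.
have sub := sub_sigma_algebra2 (@coord_sets_sub_cylinders dE E).
apply: (probability_preimage_eq_g_sigma (@cylinders_setI_closed dE E)); last exact: sub _ cA.
- move=> _ [m [B [mB ->]]]; rewrite !preimage_cylinder.
  by split; apply: bigsetI_measurable => k _; rewrite -[_ @^-1` _]setTI;
    [exact: mf | exact: mg].
- move=> _ [m [B [mB ->]]]; rewrite !independent_cylinder_prob //.
  by apply: eq_bigr => k _; exact: fg.
Qed.

Lemma iid_subsequence_law_eq (I : eqType) (f : I -> Omega -> E) (phi psi : nat -> I) :
  (forall i, measurable_fun setT (f i)) ->
  mutually_independent P f -> identically_distributed P f ->
  injective phi -> injective psi ->
  forall A, <<s @coord_sets dE E >> A ->
  P ((fun w k => f (phi k) w) @^-1` A) = P ((fun w k => f (psi k) w) @^-1` A).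
Proof.
move=> mf ind idd phi_inj psi_inj.
apply: independent_seq_law_eq => [k|k|||k B mB]; try exact: mf; try exact: idd.
- exact: mutually_independent_comp.
- exact: mutually_independent_comp.
Qed.

End independent_family.

Lemma markov_powR d (T : measurableType d) (R : realType)
    (mu : {measure set T -> \bar R}) (W : T -> R) (a alpha : R) :
  measurable_fun setT W -> 0 < a -> 0 <= alpha ->
  (mu [set x | (a <= `|W x|)%R] <= ((a `^ alpha)^-1)%:E * \int[mu]_x (`|W x| `^ alpha)%:E)%E.
Proof.
move=> mW a0 alpha0.
have mEW : measurable_fun setT (fun x => (W x)%:E) by exact/measurable_EFinP.
have := le_integral_comp_abse mu measurableT (measurable_poweR alpha)
  (fun r _ => poweR_ge0 r alpha) _ mEW a0.
rewrite setTI lee_pdivlMl ?powR_gt0 //; apply.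
by move=> x y; rewrite !inE /= !in_itv /= => /andP[x0 _] /andP[y0 _];
  apply: gt0_ler_poweR; rewrite ?in_itv /= ?x0 ?y0 ?leey.
Qed.

Lemma lt_neq_far_or_near (R : realFieldType) (z z' xi h : R) :
  (z < xi) != (z' < xi) -> h <= `|z - z'| \/ xi - h < z <= xi + h.
Proof.
move=> neq; case: (lerP h `|z - z'|) => [|]; first by left.
rewrite ltr_norml => /andP[h1 h2]; right.
by move: neq; case: (ltrP z xi); case: (ltrP z' xi) => //= ? ? _; apply/andP; split; lra.
Qed.

Lemma measurable_set_bool d (T : measurableType d) (p : T -> bool) :
  measurable_fun setT p -> measurable [set w | p w].
Proof. by move=> mp; have := mp measurableT [set true] I; rewrite setTI. Qed.

Lemma integral_lt_indicator_diff_le d (T : measurableType d) (R : realType)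
    (mu : {measure set T -> \bar R}) (Z Z' : T -> R) (xi h : R) :
  measurable_fun setT Z -> measurable_fun setT Z' ->
  (\int[mu]_w ((`|\1_[set v | Z v < xi] w - \1_[set v | Z' v < xi] w| `^ 2)%:E)
    <= mu [set w | (xi - h < Z w <= xi + h)%R] + mu [set w | (h <= `|Z w - Z' w|)%R])%E.
Proof.
move=> mZ mZ'.
have mlt (f : T -> R) : measurable_fun setT f -> measurable [set w | f w < xi].
  by move=> mf; apply: measurable_set_bool; exact: measurable_fun_ltr.
set band := [set w | _ < Z w <= _]; set far := [set w | h <= _].
have mband : measurable band.
  by apply: measurable_set_bool; apply: measurable_and;
    [exact: measurable_fun_ltr | exact: measurable_fun_ler].
have mfar : measurable far.
  apply: measurable_set_bool; apply: measurable_fun_ler => //.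
  by apply: measurableT_comp => //; exact: measurable_funB.
apply: (@le_trans _ _ (mu (band `|` far))); last exact: measureU2.
have := integral_indic mu measurableT (measurableU _ _ mband mfar).
rewrite setIT => <-.
apply: ge0_le_integral => //.
- have mI : measurable_fun setT
      (fun w => `|\1_[set v | Z v < xi] w - \1_[set v | Z' v < xi] w : R|).
    apply: measurableT_comp => //.
    by apply: measurable_funB; apply: measurable_indic; exact: mlt.
  apply/measurable_EFinP; exact: measurableT_comp (measurable_powR 2) mI.
- by apply/measurable_EFinP; apply: measurable_indic; exact: measurableU.
move=> w _; rewrite lee_fin !indicE.
have memlt (f : T -> R) : (w \in [set v | f v < xi]) = (f w < xi).
  by apply/idP/idP => [/set_mem|/mem_set].
rewrite !memlt; have [->|neq] := eqVneq (Z w < xi) (Z' w < xi).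
  by rewrite subrr normr0 powR0.
rewrite mem_set; last by case: (lt_neq_far_or_near h neq); [right | left].
by move: neq; case: (Z w < xi); case: (Z' w < xi);
  rewrite //= ?subr0 ?sub0r ?normrN normr1 powR1.
Qed.

Lemma probability_itv_oc d (T : measurableType d) (R : realType)
    (P : probability T R) (Z : T -> R) (a b : R) :
  measurable_fun setT Z -> a <= b ->
  P [set w | a < Z w <= b] =
    (fine (P [set w | Z w <= b]) - fine (P [set w | Z w <= a]))%:E.
Proof.
move=> mZ ab.
have mle c : measurable [set w | Z w <= c].
  by apply: measurable_set_bool; exact: measurable_fun_ler.
have mband : measurable [set w | a < Z w <= b].
  by apply: measurable_set_bool; apply: measurable_and;
    [exact: measurable_fun_ltr | exact: measurable_fun_ler].
have := measureDI P (mle b) (mle a).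
have -> : [set w | Z w <= b] `\` [set w | Z w <= a] = [set w | a < Z w <= b].
  apply/seteqP; split => w /=; first by move=> [-> /negP]; rewrite -ltNge => ->.
  by move=> /andP[aZ ->]; split => //; apply/negP; rewrite -ltNge.
have -> : [set w | Z w <= b] `&` [set w | Z w <= a] = [set w | Z w <= a].
  by apply/setIidr => w /= Za; exact: le_trans ab.
by move=> ->; rewrite fineD ?fin_num_measure ?addrK ?fineK ?fin_num_measure.
Qed.

Lemma markov_moment d (T : measurableType d) (R : realType)
    (mu : {measure set T -> \bar R}) (W : T -> R) (a alpha c : R) :
  measurable_fun setT W -> 0 < a -> 0 < alpha ->
  ((\int[mu]_x (`|W x| `^ alpha)%:E) `^ alpha^-1 <= c%:E)%E ->
  (mu [set x | (a <= `|W x|)%R] <= (c `^ alpha / a `^ alpha)%:E)%E.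
Proof.
move=> mW a0 alpha0; set J := (\int[mu]_x _)%E => Jc.
have J0 : (0 <= J)%E by apply: integral_ge0 => x _; rewrite lee_fin powR_ge0.
apply: le_trans (markov_powR mu mW a0 (ltW alpha0)) _; rewrite -/J mulrC EFinM.
apply: lee_wpmul2l; first by rewrite lee_fin invr_ge0 powR_ge0.
have -> : J = ((J `^ alpha^-1) `^ alpha)%E by rewrite -poweRrM mulVf ?gt_eqF // poweRe1.
rewrite -poweR_EFin; apply: (gt0_ler_poweR (ltW alpha0)) => //;
  rewrite in_itv /= ?poweR_ge0 ?leey //.
by rewrite (le_trans _ Jc) ?poweR_ge0.
Qed.

Lemma indicator_lt_L2_le d (T : measurableType d) (R : realType)
    (P : probability T R) (Z Z' : T -> R) (xi h alpha b c : R) :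
  measurable_fun setT Z -> measurable_fun setT Z' -> 0 < h -> 0 < alpha ->
  fine (P [set w | Z w <= xi + h]) - fine (P [set w | Z w <= xi - h]) <= b ->
  ((\int[P]_w (`|Z w - Z' w| `^ alpha)%:E) `^ alpha^-1 <= c%:E)%E ->
  (\int[P]_w ((`|\1_[set v | Z v < xi] w - \1_[set v | Z' v < xi] w| `^ 2)%:E)
    <= (b + c `^ alpha / h `^ alpha)%:E)%E.
Proof.
move=> mZ mZ' h0 alpha0 Fb Jc.
apply: le_trans (integral_lt_indicator_diff_le P xi h mZ mZ') _.
rewrite EFinD; apply: leeD; last exact: markov_moment (measurable_funB mZ mZ') h0 alpha0 Jc.
apply: (@le_trans _ _
  (fine (P [set w | Z w <= xi + h]) - fine (P [set w | Z w <= xi - h]))%:E).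
  by rewrite -probability_itv_oc //; lra.
by rewrite lee_fin.
Qed.

Lemma lipschitz_increment_le (R : realFieldType) (F : R -> R) (x0 eta L xi h : R) :
  (forall x y, `|x - x0| < eta -> `|y - x0| < eta -> `|F x - F y| <= L * `|x - y|) ->
  `|xi - x0| <= eta / 2 -> 0 <= h < eta / 2 ->
  F (xi + h) - F (xi - h) <= Num.max L 0 * (2 * h).
Proof.
move=> Lip; rewrite ler_norml => /andP[xi1 xi2] /andP[h0 h1].
have xh1 : `|xi + h - x0| < eta by rewrite ltr_norml; apply/andP; split; lra.
have xh2 : `|xi - h - x0| < eta by rewrite ltr_norml; apply/andP; split; lra.
apply: le_trans (ler_norm _) (le_trans (Lip _ _ xh1 xh2) _).
have -> : xi + h - (xi - h) = 2 * h by ring.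
by rewrite ger0_norm ?ler_wpM2r ?le_max ?lexx //; lra.
Qed.

Lemma powRXn (R : realType) (a r : R) (n : nat) : 0 <= a -> (a ^+ n) `^ r = (a `^ r) ^+ n.
Proof.
move=> a0; rewrite -powR_mulrn // -powRrM mulrC powRrM powR_mulrn //.
exact: powR_ge0.
Qed.

Lemma poweR_le_geometric (R : realType) (x : \bar R) (K w r : R) (n : nat) :
  0 <= r -> 0 <= K -> 0 <= w -> (0 <= x)%E -> (x <= (K * w ^+ n)%:E)%E ->
  (x `^ r <= (K `^ r * (w `^ r) ^+ n)%:E)%E.
Proof.
move=> r0 K0 w0 x0 xle; rewrite -powRXn // -powRM ?exprn_ge0 // -poweR_EFin.
apply: (gt0_ler_poweR r0) => //; rewrite in_itv /= ?x0 ?leey //.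
by rewrite lee_fin mulr_ge0 ?exprn_ge0.
Qed.

Lemma expr_eventually_lt (R : realType) (w e : R) : 0 <= w -> w < 1 -> 0 < e ->
  exists N : nat, forall n, (N <= n)%N -> w ^+ n < e.
Proof.
move=> w0 w1 e0.
have /cvg_expr/cvgr0_norm_lt/(_ e e0)[N _ wN] : `|w| < 1 by rewrite ger0_norm.
by exists N => n /wN; rewrite /= ger0_norm // exprn_ge0.
Qed.

(* u^n is the width of the window around xi; the Markov tail then decays like
   (rho/u)^(alpha n). *)
Lemma geometric_split (R : realType) (rho alpha : R) : 0 < rho < 1 -> 0 < alpha ->
  exists u w : R, [/\ 0 < u, u <= w, w < 1 &
    forall (C : R) (n : nat), 0 <= C ->
      (C * rho ^+ n) `^ alpha / (u ^+ n) `^ alpha <= C `^ alpha * w ^+ n].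
Proof.
move=> /andP[rho0 rho1] alpha0; pose u := (1 + rho) / 2.
have u0 : 0 < u by rewrite /u; lra.
have u1 : u < 1 by rewrite /u; lra.
pose v := rho `^ alpha / u `^ alpha.
have v0 : 0 <= v by rewrite divr_ge0 ?powR_ge0.
have v1 : v < 1.
  rewrite ltr_pdivrMr ?powR_gt0 // mul1r.
  by apply: gt0_ltr_powR; rewrite ?nnegrE ?ltW // /u; lra.
exists u, (Num.max u v); split; rewrite ?le_max ?lexx ?gt_max ?u1 //.
move=> C n C0; rewrite powRM ?exprn_ge0 ?(ltW rho0) // !powRXn ?(ltW rho0) ?(ltW u0) //.
rewrite -mulrA -expr_div_n ler_wpM2l ?powR_ge0 //.
by apply: lerXn2r; rewrite ?nnegrE ?le_max ?lexx ?orbT // ltW.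
Qed.

Theorem proposition3p1 (R : realType) (d : measure_display) (Omega : measurableType d)
  (P : probability Omega R) (dE : measure_display) (E : measurableType dE)
  (eps epss : int -> Omega -> E) (Y : (nat -> E) -> R) (tau : R) :
  (forall t, measurable_fun setT (eps t)) ->
  (forall t, measurable_fun setT (epss t)) ->
  (* (eps_t) and (eps*_t) together form an i.i.d. family *)
  mutually_independent P (fun i : bool * int => if i.1 then epss i.2 else eps i.2) ->
  identically_distributed P (fun i : bool * int => if i.1 then epss i.2 else eps i.2) ->
  prod_measurable_fun Y ->
  0 < tau < 1 ->
  let X : int -> Omega -> R := fun t w => Y (fun k => eps (t - k%:Z) w) in
  let X' : nat -> Omega -> R := fun n w =>
    Y (fun k => if (k < n)%N then eps (n%:Z - k%:Z) w else epss (n%:Z - k%:Z) w) in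
  let F : R -> R := fun x => fine (P [set w | X 0 w <= x]) in
  let xi0 : R := inf [set x | tau <= F x] in
  (exists eta L : R, 0 < eta /\
     forall x y, `|x - xi0| < eta -> `|y - xi0| < eta -> `|F x - F y| <= L * `|x - y|) ->
  (exists alpha rho : R, 0 < alpha /\ 0 < rho < 1 /\
     exists (C : R) (N : nat), forall n : nat, (N <= n)%N ->
       ((\int[P]_w ((`|X n%:Z w - X' n w| `^ alpha)%:E)) `^ alpha^-1 <=
         (C * rho ^+ n)%:E)%E) ->
  exists delta sigma : R, 0 < delta /\ 0 < sigma < 1 /\
    exists (C : R) (N : nat), forall n : nat, (N <= n)%N ->
      forall xi : R, `|xi - xi0| <= delta ->
        ((\int[P]_w ((`|\1_[set v | X n%:Z v < xi] w - \1_[set v | X' n v < xi] w| `^ 2)%:E)) `^ 2^-1 <=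
          (C * sigma ^+ n)%:E)%E.
Proof.
(* The level tau only enters through xi0: the bound holds around any point where F is
   Lipschitz. *)
move=> meps mepss ind idd mY _ X X' F xi0 [eta [L [eta0 Lip]]]
  [alpha [rho [alpha0 [rho01 [C [N hmom]]]]]].
set f := fun i : bool * int => _ in ind idd.
have mf i : measurable_fun setT (f i) by case: i => [[] t]; [exact: mepss | exact: meps].
have shift_inj (t : int) : injective (fun k : nat => (false, t - k%:Z)).
  by move=> k l [] /addrI /oppr_inj [].
have mX t : measurable_fun setT (X t) by apply: prod_measurable_fun_comp => // k.
have mX' n : measurable_fun setT (X' n).
  by apply: prod_measurable_fun_comp => // k; case: (k < n)%N.
(* Stationarity: X_n and X_0 apply Y to two injective subsequences of one i.i.d. family. *)
have cdfX (n : nat) c : fine (P [set w | X n%:Z w <= c]) = F c.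
  have mle : measurable [set x : R | x <= c].
    by apply: measurable_set_bool; exact: measurable_fun_ler.
  by rewrite /F (iid_subsequence_law_eq mf ind idd (shift_inj n%:Z) (shift_inj 0) (mY _ mle)).
have C0 : 0 <= C.
  have := le_trans (poweR_ge0 _ _) (hmom N (leqnn N)).
  by case/andP: rho01 => rho0 _; rewrite lee_fin pmulr_lge0 // exprn_gt0.
have [u [w [u0 uw w1 rate]]] := geometric_split rho01 alpha0.
have w0 : 0 <= w := le_trans (ltW u0) uw.
have [N1 wN1] : exists N1 : nat, forall n, (N1 <= n)%N -> w ^+ n < eta / 4.
  by apply: expr_eventually_lt => //; lra.
pose L' := Num.max L 0.
exists (eta / 2), (w `^ 2^-1); split; first lra.
split; first by rewrite powR12_sqrt // sqrtr_gt0 (lt_le_trans u0 uw) -sqrtr1 ltr_sqrt.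
exists ((2 * L' + C `^ alpha) `^ 2^-1), (maxn N N1) => n.
rewrite geq_max => /andP[Nn N1n] xi xi_near.
have h0 : 0 < u ^+ n := exprn_gt0 n u0.
have hw : u ^+ n <= w ^+ n by apply: lerXn2r; rewrite // nnegrE ltW.
have hsmall := wN1 n N1n.
apply: poweR_le_geometric;
  rewrite ?invr_ge0 ?addr_ge0 ?mulr_ge0 ?powR_ge0 ?le_max ?lexx ?orbT //.
  by apply: integral_ge0 => x _; rewrite lee_fin powR_ge0.
apply: le_trans (indicator_lt_L2_le (mX n%:Z) (mX' n) h0 alpha0 _ (hmom n Nn)) _.
  rewrite !cdfX; apply: (lipschitz_increment_le Lip xi_near).
  by rewrite ltW //=; lra.
rewrite lee_fin -/L' [X in _ <= X]mulrDl; apply: lerD; last exact: rate.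
have L'0 : 0 <= L' by rewrite le_max lexx orbT.
nra.
Qed.
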